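(* Assume $L$ satisfies (L1),(L2) and $W$ satisfies (W1)–(W6) (as in the context), and let $\varrho>0$. Then there exists $\rho>\varrho$ such that $\sup_{u\in\partial Q}I(u)\le0$, where $$Q=\{\zeta e_{\bar n+1}:0\le\zeta\le\rho\}\oplus\{u\in E^-\oplus E^0:\|u\|\le\rho\}$$ and $\partial Q$ is the boundary of $Q$ relative to the finite-dimensional space $\operatorname{span}\{e_{\bar n+1}\}\oplus E^-\oplus E^0$, i.e. $\partial Q=\{u\in E^-\oplus E^0:\|u\|\le\rho\}\cup\big(\rho e_{\bar n+1}+\{u\in E^-\oplus E^0:\|u\|\le\rho\}\big)\cup\big(\{\zeta e_{\bar n+1}:0\le\zeta\le\rho\}+\{u\in E^-\oplus E^0:\|u\|=\rho\}\big)$.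
   Context: $L\in C(\mathbb{R},\mathbb{R}^{N\times N})$ symmetric-matrix valued, $W\in C^1(\mathbb{R}\times\mathbb{R}^N,\mathbb{R})$, $\nabla W$ the gradient in $x$, $\widetilde W(t,x)=2W(t,x)-(\nabla W(t,x),x)$, $l(t)=\min_{|x|=1}(L(t)x,x)$. (L1): $\exists\,\alpha>1,M>0$ with $\lim_{R\to\infty}\operatorname{meas}\{t:|t|\ge R,\ l(t)\le M|t|\ln^\alpha|t|\}=0$. (L2): $\exists L_0>0$ with $(L(t)x,x)\ge-L_0|x|^2$. $\mathcal{H}$ is the self-adjoint extension in $L^2(\mathbb{R},\mathbb{R}^N)$ of $-\frac{d^2}{dt^2}+L(t)$, with eigenvalues $\lambda_1\le\lambda_2\le\cdots\to\infty$ and eigenfunctions $e_n$ ($\mathcal{H}e_n=\lambda_ne_n$) forming an orthogonal basis of $L^2$; $\bar n$ is the number of nonpositive eigenvalues. $E=\mathfrak{D}(|\mathcal{H}|^{1/2})$, $E=E^-\oplus E^0\oplus E^+$ (spans of eigenfunctions with negative, zero, positive eigenvalues; $E^-\oplus E^0$ finite dimensional), norm $\|u\|^2=\||\mathcal{H}|^{1/2}u\|_{L^2}^2+\|u^0\|_{L^2}^2$. $I(u)=\frac12\|u^+\|^2-\frac12\|u^-\|^2-\int_{\mathbb{R}}W(t,u(t))\,dt$. (W1) $W(t,0)=0$, $|\nabla W(t,x)|\le b_1|x|$. (W2) $\widetilde W(t,x)\ge b_2|x|^\mu$ for $|x|\ge r_1$, with $b_2,r_1>0,\mu>1$. (W3)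 $\widetilde W(t,x)\ge-b_3|x|$ for $|x|<r_1$, $b_3>0$. (W4) $|W(t,x)|\le\frac{\lambda_{\bar n+1}-\sigma_0}{2}|x|^2$ for $|x|\le r_2$, $r_2,\sigma_0>0$. (W5) $W(t,x)\ge(\frac{\lambda_{\bar n+1}}2+\varepsilon_0)|x|^2$ for $|x|\ge r_\infty$, $\varepsilon_0,r_\infty>0$. (W6) $W\ge0$. All for all $t\in\mathbb{R}$. *)

From HB Require Import structures.
From mathcomp Require Import all_boot all_order all_algebra.
From mathcomp Require Import all_classical all_reals all_analysis.
Set Implicit Arguments. Unset Strict Implicit. Unset Printing Implicit Defensive.
Import Order.TTheory GRing.Theory Num.Theory.
Import numFieldNormedType.Exports.
Local Open Scope classical_set_scope.
Local Open Scope ring_scope.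

Section Defs.
Variables (R : realType) (N : nat).
Local Notation mu := (@lebesgue_measure R).

Definition dotv (x y : 'rV[R]_N) : R := \sum_(i < N) x 0 i * y 0 i.
Definition vnorm (x : 'rV[R]_N) : R := Num.sqrt (dotv x x).

Definition quadf (A : 'M[R]_N) (x : 'rV[R]_N) : R := (x *m A *m x^T) 0 0.

Definition lmin (L : R -> 'M[R]_N) (t : R) : R :=
  inf [set q | exists x, vnorm x = 1 /\ q = quadf (L t) x].

Definition L2sq (u : R -> 'rV[R]_N) : \bar R :=
  (\int[mu]_t ((vnorm (u t)) ^+ 2)%:E)%E.
Definition isL2 (u : R -> 'rV[R]_N) : Prop :=
  (forall i : 'I_N, measurable_fun setT (fun t => u t 0 i)) /\ (L2sq u < +oo)%E.
Definition ipL2 (u v : R -> 'rV[R]_N) : R :=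
  Rintegral mu setT (fun t => dotv (u t) (v t)).

(* Spectral data of the self-adjoint operator H = -d^2/dt^2 + L(t):
   e is a complete orthonormal family in L^2 of (classical) eigenfunctions,
   H e_n = lambda_n e_n, with lambda nondecreasing and tending to +oo. *)
Definition eigen_basis (L : R -> 'M[R]_N) (lam : nat -> R)
    (e : nat -> R -> 'rV[R]_N) : Prop :=
  [/\ (forall n, isL2 (e n)) /\
      (forall m n, ipL2 (e m) (e n) = (m == n)%:R),
      (forall u, isL2 u ->
         (fun k => \sum_(n < k) (ipL2 u (e n)) ^+ 2) @ \oo --> fine (L2sq u)),
      (forall n t (i : 'I_N),
         derivable (fun s => e n s 0 i) t 1 /\
         derivable (derive1 (fun s => e n s 0 i)) t 1 /\
         - derive1 (derive1 (fun s => e n s 0 i)) t + (e n t *m L t) 0 i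
           = lam n * e n t 0 i),
      {homo lam : m n / (m <= n)%N >-> m <= n} &
      lam @ \oo --> +oo].

(* The norm of E = D(|H|^{1/2}):
   ||u||^2 = || |H|^{1/2} u ||_{L^2}^2 + ||u^0||_{L^2}^2
           = sum_n (|lambda_n| + [lambda_n = 0]) <u, e_n>^2 *)
Definition Enorm (lam : nat -> R) (e : nat -> R -> 'rV[R]_N)
    (u : R -> 'rV[R]_N) : R :=
  Num.sqrt (limn (fun k => \sum_(n < k)
     (`|lam n| + (lam n == 0)%:R) * (ipL2 u (e n)) ^+ 2)).

(* The functional I(u) = 1/2 ||u^+||^2 - 1/2 ||u^-||^2 - int W(t, u(t)) dt,
   with ||u^+||^2 = sum_{lambda_n > 0} lambda_n <u,e_n>^2 and
        ||u^-||^2 = sum_{lambda_n < 0} |lambda_n| <u,e_n>^2. *)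
Definition Ifun (lam : nat -> R) (e : nat -> R -> 'rV[R]_N)
    (W : R -> 'rV[R]_N -> R) (u : R -> 'rV[R]_N) : R :=
  2^-1 * limn (fun k => \sum_(n < k | 0 < lam n) lam n * (ipL2 u (e n)) ^+ 2)
  - 2^-1 * limn (fun k => \sum_(n < k | lam n < 0) `|lam n| * (ipL2 u (e n)) ^+ 2)
  - Rintegral mu setT (fun t => W t (u t)).

(* E^- (+) E^0 = span{e_0, ..., e_{nbar-1}} (0-based indexing) *)
Definition lincomb (nbar : nat) (e : nat -> R -> 'rV[R]_N) (c : 'I_nbar -> R)
  : R -> 'rV[R]_N := fun t => \sum_(k < nbar) c k *: e k t.

Definition Ball_negzero (lam : nat -> R) (e : nat -> R -> 'rV[R]_N) (nbar : nat) (rho : R) : set (R -> 'rV[R]_N) :=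
  [set u | exists c : 'I_nbar -> R, u = lincomb e c /\ Enorm lam e u <= rho].
Definition Sphere_negzero (lam : nat -> R) (e : nat -> R -> 'rV[R]_N) (nbar : nat) (rho : R) : set (R -> 'rV[R]_N) :=
  [set u | exists c : 'I_nbar -> R, u = lincomb e c /\ Enorm lam e u = rho].

Definition boundaryQ (lam : nat -> R) (e : nat -> R -> 'rV[R]_N) (nbar : nat) (rho : R) : set (R -> 'rV[R]_N) :=
  Ball_negzero lam e nbar rho
  `|` [set u | exists v, Ball_negzero lam e nbar rho v /\
               u = (fun t => rho *: e nbar t + v t)]
  `|` [set u | exists zeta v, 0 <= zeta <= rho /\ Sphere_negzero lam e nbar rho v /\
               u = (fun t => zeta *: e nbar t + v t)].

End Defs.

(* On span{e_0, ..., e_nbar} (indices are 0-based, so e_nbar is the paper's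
   e_{nbar+1}) the quadratic part of I is at most (lam_nbar / 2) z^2, z being the
   e_nbar-coefficient, since lam_n <= 0 below nbar; with (W6) this already gives
   I <= 0 on E^- (+) E^0.  On the two other faces of the boundary it suffices that
   int W(t, u) >= (lam_nbar / 2) |d|^2 once the coefficient vector d is large:
   (W5) gives W >= (lam_nbar / 2 + eps0) |u|^2 where |u| >= rinf, and by
   Cauchy-Schwarz |u(t)|^2 <= |d|^2 S(t) with S = sum_k |e_k|^2, so the region
   |u| < rinf costs at most (lam_nbar / 2 + eps0) |d|^2 int min(S, rinf^2 / |d|^2),
   which is below eps0 |d|^2 for |d| large by dominated convergence.  Finally the
   norm of E is bounded on the span by a multiple of |d|, so a large rho makes |d|
   large on those faces.  (W1) only serves to make W(t, u(t)) integrable. *)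

From HB Require Import structures.
From mathcomp Require Import all_boot all_order all_algebra.
From mathcomp Require Import all_classical all_reals all_analysis.
From mathcomp Require Import ring lra measurable_realfun.
Import Order.TTheory GRing.Theory Num.Theory.
Import numFieldNormedType.Exports.
Local Open Scope classical_set_scope.
Local Open Scope ring_scope.

Section Euclidean.
Context {R : realType} {N : nat}.
Implicit Types x y z : 'rV[R]_N.

Lemma dotvC x y : dotv x y = dotv y x.
Proof. by apply: eq_bigr => i _; rewrite mulrC. Qed.

Lemma dotvDl x y z : dotv (x + y) z = dotv x z + dotv y z.
Proof. by rewrite /dotv -big_split; apply: eq_bigr => i _; rewrite mxE mulrDl. Qed.

Lemma dotvZl (a : R) x y : dotv (a *: x) y = a * dotv x y.
Proof. by rewrite /dotv mulr_sumr; apply: eq_bigr => i _; rewrite mxE mulrA. Qed.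

Lemma dotvDr x y z : dotv x (y + z) = dotv x y + dotv x z.
Proof. by rewrite dotvC dotvDl !(dotvC x). Qed.

Lemma dotvZr (a : R) x y : dotv x (a *: y) = a * dotv x y.
Proof. by rewrite dotvC dotvZl dotvC. Qed.

Lemma dotv_suml m (F : nat -> 'rV[R]_N) y :
  dotv (\sum_(k < m) F k) y = \sum_(k < m) dotv (F k) y.
Proof.
by rewrite /dotv exchange_big; apply: eq_bigr => i _; rewrite summxE mulr_suml.
Qed.

Lemma dotv_sumr m (F : nat -> 'rV[R]_N) y :
  dotv y (\sum_(k < m) F k) = \sum_(k < m) dotv y (F k).
Proof. by rewrite dotvC dotv_suml; apply: eq_bigr => k _; rewrite dotvC. Qed.

Lemma dotv_ge0 x : 0 <= dotv x x.
Proof. by apply: sumr_ge0 => i _; rewrite -expr2 sqr_ge0. Qed.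

Lemma sqr_vnorm x : vnorm x ^+ 2 = dotv x x.
Proof. by rewrite sqr_sqrtr // dotv_ge0. Qed.

Lemma vnormZ (a : R) x : vnorm (a *: x) = `|a| * vnorm x.
Proof.
by rewrite /vnorm dotvZl dotvZr mulrA -expr2 sqrtrM ?sqr_ge0 // sqrtr_sqr.
Qed.

Lemma dotv_CauchySchwarz x y : dotv x y ^+ 2 <= dotv x x * dotv y y.
Proof.
have sqr_comb_ge0 a b :
    0 <= a ^+ 2 * dotv x x + 2 * a * b * dotv x y + b ^+ 2 * dotv y y.
  have := dotv_ge0 (a *: x + b *: y).
  rewrite !(dotvDl, dotvDr, dotvZl, dotvZr) (dotvC y x).
  by congr (_ <= _); ring.
have := dotv_ge0 x; have := dotv_ge0 y.
set A := dotv x x in sqr_comb_ge0 *; set B := dotv y y in sqr_comb_ge0 *.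
set C := dotv x y in sqr_comb_ge0 * => B_ge0 A_ge0.
(* (a, b) = (B, -C) gives B (A B - C^2) >= 0, and (C, -A) gives A (A B - C^2) >= 0. *)
have := sqr_comb_ge0 B (- C); have := sqr_comb_ge0 C (- A).
have := sqr_comb_ge0 1 1; have := sqr_comb_ge0 1 (-1).
move=> comb_1N1 comb_11 comb_CNA comb_BNC.
have [B_eq0|B_neq0] := eqVneq B 0; last first.
  have : 0 < B by rewrite lt_def B_neq0.
  nra.
have [A_eq0|A_neq0] := eqVneq A 0; last first.
  have : 0 < A by rewrite lt_def A_neq0.
  nra.
rewrite A_eq0 B_eq0 in comb_1N1 comb_11 *; nra.
Qed.

Lemma dotv_le_vnorm x y : dotv x y <= vnorm x * vnorm y.
Proof.
have := dotv_CauchySchwarz x y; rewrite -!sqr_vnorm -exprMn.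
have : 0 <= vnorm x * vnorm y by rewrite mulr_ge0 ?sqrtr_ge0.
set P := vnorm x * vnorm y; nra.
Qed.

Lemma normr_dotv_le x y : `|dotv x y| <= dotv x x + dotv y y.
Proof.
have := dotv_CauchySchwarz x y; have := dotv_ge0 x; have := dotv_ge0 y.
by move=> *; rewrite ler_norml; apply/andP; split; nra.
Qed.

End Euclidean.

Section SumBounds.
Context {R : realType}.

Lemma sqr_sum_mul_le m (a b : nat -> R) :
  (\sum_(k < m) a k * b k) ^+ 2 <= (\sum_(k < m) a k ^+ 2) * \sum_(k < m) b k ^+ 2.
Proof.
have row_dotv (f g : nat -> R) :
    dotv (\row_(k < m) f k) (\row_(k < m) g k) = \sum_(k < m) f k * g k.
  by apply: eq_bigr => k _; rewrite !mxE.
have sum_sqr (f : nat -> R) : \sum_(k < m) f k ^+ 2 = \sum_(k < m) f k * f k.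
  by apply: eq_bigr => k _; rewrite expr2.
by rewrite !sum_sqr -!row_dotv; exact: dotv_CauchySchwarz.
Qed.

Lemma dotv_sum_scale_le {N} m (d : nat -> R) (x : nat -> 'rV[R]_N) :
  dotv (\sum_(k < m) d k *: x k) (\sum_(k < m) d k *: x k) <=
  (\sum_(k < m) d k ^+ 2) * \sum_(k < m) dotv (x k) (x k).
Proof.
have coord i : (\sum_(k < m) d k *: x k) 0 i = \sum_(k < m) d k * x k 0 i.
  by rewrite summxE; apply: eq_bigr => k _; rewrite mxE.
have -> : \sum_(k < m) dotv (x k) (x k) = \sum_(i < N) \sum_(k < m) x k 0 i ^+ 2.
  by rewrite exchange_big; apply: eq_bigr => k _; apply: eq_bigr => i _; rewrite expr2.
rewrite /dotv mulr_sumr; apply: ler_sum => i _; rewrite coord -expr2.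
exact: (sqr_sum_mul_le m d (fun k => x k 0 i)).
Qed.

Lemma sum_mul_le_mul_sum m (w x : nat -> R) :
  (forall n, 0 <= w n) -> (forall n, 0 <= x n) ->
  \sum_(n < m) w n * x n <= (\sum_(n < m) w n) * \sum_(n < m) x n.
Proof.
move=> w_ge0 x_ge0; rewrite mulr_sumr; apply: ler_sum => n _.
rewrite ler_wpM2r // (bigD1 n) //= lerDl.
by apply: sumr_ge0 => k _; exact: w_ge0.
Qed.

End SumBounds.

Section Continuity.
Context {R : realType}.

Lemma continuous_sum (I : Type) (r : seq I) (P : pred I) (F : I -> R -> R) :
  (forall i, continuous (F i)) -> continuous (fun t => \sum_(i <- r | P i) F i t).
Proof.
move=> cF; elim: r => [|i r IH].
  by under eq_fun do rewrite big_nil; exact: cst_continuous.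
under eq_fun do rewrite big_cons; case: (P i) => // t.
exact: continuousD (cF i t) (IH t).
Qed.

Lemma continuous_dotv {N} (f g : R -> 'rV[R]_N) :
  (forall i, continuous (fun t => f t 0 i)) ->
  (forall i, continuous (fun t => g t 0 i)) ->
  continuous (fun t => dotv (f t) (g t)).
Proof.
move=> cf cg; apply: continuous_sum => i t.
exact: continuousM (cf i t) (cg i t).
Qed.

End Continuity.

Section RealIntegrals.
Context {d} {T : measurableType d} {R : realType}.
Context {mu : {measure set T -> \bar R}} {D : set T}.
Hypothesis mD : measurable D.

Lemma integrableZlR (c : R) (f : T -> R) :
  mu.-integrable D (EFin \o f) -> mu.-integrable D (EFin \o fun t => c * f t).
Proof.
by move=> /(integrableZl mD c); apply: (eq_integrable mD) => t _; rewrite /= EFinM.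
Qed.

Lemma integrableBR (f g : T -> R) :
  mu.-integrable D (EFin \o f) -> mu.-integrable D (EFin \o g) ->
  mu.-integrable D (EFin \o fun t => f t - g t).
Proof.
move=> If Ig; apply: (eq_integrable mD _ _ _ (integrableB mD If Ig)) => t _.
by rewrite /= EFinB.
Qed.

Lemma integrable_sumR m (F : nat -> T -> R) :
  (forall k, mu.-integrable D (EFin \o F k)) ->
  mu.-integrable D (EFin \o fun t => \sum_(k < m) F k t).
Proof.
move=> iF; have := integrable_sum mD (index_enum 'I_m) (P := xpredT)
  (h := fun k => EFin \o F k) (fun k _ => iF k).
by apply: (eq_integrable mD) => t _; rewrite /= sumEFin.
Qed.

Lemma Rintegral_sum m (F : nat -> T -> R) :
  (forall k, mu.-integrable D (EFin \o F k)) ->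
  \int[mu]_(t in D) (\sum_(k < m) F k t) = \sum_(k < m) \int[mu]_(t in D) F k t.
Proof.
move=> iF; elim: m => [|m IH].
  by under eq_Rintegral do rewrite big_ord0; rewrite big_ord0 Rintegral_cst // mul0r.
under eq_Rintegral do rewrite big_ord_recr /=.
by rewrite RintegralD ?IH ?big_ord_recr //; exact: integrable_sumR.
Qed.

End RealIntegrals.

Section OrthonormalSpan.
Context {R : realType} {N : nat}.
Variable e : nat -> R -> 'rV[R]_N.
Local Notation mu := (@lebesgue_measure R).
Hypothesis e_derivable : forall n t (i : 'I_N), derivable (fun s => e n s 0 i) t 1.
Hypothesis e_orthonormal : forall m n, ipL2 (e m) (e n) = (m == n)%:R.

Definition ecomb (d : nat -> R) (m : nat) : R -> 'rV[R]_N :=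
  fun t => \sum_(k < m) d k *: e k t.

Lemma continuous_e n i : continuous (fun t => e n t 0 i).
Proof. by move=> t; apply/differentiable_continuous/derivable1_diffP/e_derivable. Qed.

Lemma derivable_ecomb d m t : derivable (ecomb d m) t 1.
Proof.
apply/derivable_mxP => i j; rewrite (ord1 i).
have -> : (fun s => ecomb d m s 0 j) = \sum_(k < m) (d k \*: fun s => e k s 0 j).
  by apply/funext => s; rewrite fct_sumE summxE; apply: eq_bigr => k _; rewrite mxE.
by apply: derivable_sum => k; exact: derivableZ.
Qed.

Lemma continuous_ecomb d m : continuous (ecomb d m).
Proof. by move=> t; apply/differentiable_continuous/derivable1_diffP/derivable_ecomb. Qed.

Lemma integrable_dotv_e_diag n :
  mu.-integrable setT (EFin \o fun t => dotv (e n t) (e n t)).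
Proof.
apply/integrableP; split.
  apply/measurable_EFinP; apply: continuous_measurable_fun.
  by apply: continuous_dotv => i; exact: continuous_e.
have := e_orthonormal n n; rewrite eqxx /ipL2 /Rintegral => int_one.
have -> : (\int[mu]_x `|(EFin \o fun t => dotv (e n t) (e n t)) x|)%E =
          (\int[mu]_x (dotv (e n x) (e n x))%:E)%E.
  by apply: eq_integral => t _ /=; rewrite ger0_norm ?dotv_ge0.
(* otherwise the integral is +oo and its [fine] is 0, not 1 *)
rewrite ltey; apply/eqP => infty; move: int_one; rewrite infty /=.
by move/eqP; rewrite eq_sym oner_eq0.
Qed.

Lemma integrable_dotv_e m n :
  mu.-integrable setT (EFin \o fun t => dotv (e m t) (e n t)).
Proof.
have := integrableD measurableT (integrable_dotv_e_diag m) (integrable_dotv_e_diag n).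
apply: le_integrable => //.
  apply/measurable_EFinP; apply: continuous_measurable_fun.
  by apply: continuous_dotv => i; exact: continuous_e.
move=> t _ /=; rewrite lee_fin (ger0_norm (addr_ge0 (dotv_ge0 _) (dotv_ge0 _))).
exact: normr_dotv_le.
Qed.

Lemma dotv_ecomb_l d m t y :
  dotv (ecomb d m t) y = \sum_(k < m) d k * dotv (e k t) y.
Proof.
rewrite (dotv_suml m (fun k => d k *: e k t)).
by apply: eq_bigr => k _; rewrite dotvZl.
Qed.

Lemma dotv_ecomb_r d m t y :
  dotv y (ecomb d m t) = \sum_(k < m) d k * dotv y (e k t).
Proof.
rewrite (dotv_sumr m (fun k => d k *: e k t)).
by apply: eq_bigr => k _; rewrite dotvZr.
Qed.

Lemma integrable_dotv_ecomb_e d m n :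
  mu.-integrable setT (EFin \o fun t => dotv (ecomb d m t) (e n t)).
Proof.
rewrite (funext (fun t => dotv_ecomb_l d m t (e n t))).
apply: (integrable_sumR (mu := mu) measurableT m
  (fun k t => d k * dotv (e k t) (e n t))) => // k.
exact/integrableZlR/integrable_dotv_e.
Qed.

Lemma ipL2_ecomb_e d m n : ipL2 (ecomb d m) (e n) = if (n < m)%N then d n else 0.
Proof.
rewrite /ipL2; under eq_Rintegral do rewrite dotv_ecomb_l.
rewrite (Rintegral_sum (mu := mu) measurableT m
  (fun k t => d k * dotv (e k t) (e n t))) // => [|k];
  last exact/integrableZlR/integrable_dotv_e.
rewrite -(big_ord1_eq +%R d n m) [RHS]big_mkcond; apply: eq_bigr => k _.
rewrite RintegralZl //; last exact: integrable_dotv_e.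
by rewrite -/(ipL2 (e k) (e n)) e_orthonormal mulr_natr mulrb.
Qed.

Lemma integrable_sqr_ecomb d m :
  mu.-integrable setT (EFin \o fun t => dotv (ecomb d m t) (ecomb d m t)).
Proof.
rewrite (funext (fun t => dotv_ecomb_r d m t (ecomb d m t))).
apply: (integrable_sumR (mu := mu) measurableT m
  (fun k t => d k * dotv (ecomb d m t) (e k t))) => // k.
exact/integrableZlR/integrable_dotv_ecomb_e.
Qed.

Lemma L2_sqr_ecomb d m :
  \int[mu]_(t in setT) dotv (ecomb d m t) (ecomb d m t) = \sum_(k < m) d k ^+ 2.
Proof.
under eq_Rintegral do rewrite dotv_ecomb_r.
rewrite (Rintegral_sum (mu := mu) measurableT m
  (fun k t => d k * dotv (ecomb d m t) (e k t))) // => [|k];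
  last exact/integrableZlR/integrable_dotv_ecomb_e.
apply: eq_bigr => k _; rewrite RintegralZl //; last exact: integrable_dotv_ecomb_e.
by rewrite -/(ipL2 _ _) ipL2_ecomb_e ltn_ord expr2.
Qed.

Lemma limn_weighted_ipL2_ecomb (w : nat -> R) (P : pred nat) d m :
  limn (fun k => \sum_(n < k | P n) w n * ipL2 (ecomb d m) (e n) ^+ 2) =
  \sum_(n < m | P n) w n * d n ^+ 2.
Proof.
apply: cvg_lim => //; apply: cvg_near_cst; exists m => // k /= mk.
rewrite (big_ord_widen_cond _ P (fun n => w n * d n ^+ 2) mk).
rewrite big_mkcond [RHS]big_mkcond; apply: eq_bigr => n _.
rewrite ipL2_ecomb_e; case: (P n) => //=.
by case: ifP => // _; rewrite expr0n mulr0.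
Qed.

End OrthonormalSpan.

Section QuadraticUpperBound.
Context {R : realType} {N : nat}.
Variables (W : R -> 'rV[R]_N -> R)
  (gradW : R -> 'rV[R]_N -> 'rV[R]_N) (b : R).
Hypothesis W_derive : forall t x v, is_derive x v (W t) (dotv (gradW t x) v).
Hypothesis W_at0 : forall t, W t 0 = 0.
Hypothesis b_ge0 : 0 <= b.
Hypothesis gradW_le : forall t x, vnorm (gradW t x) <= b * vnorm x.

Lemma is_derive_W_ray (t : R) (x : 'rV[R]_N) (s : R) :
  is_derive s 1 (fun r : R => W t (r *: x)) (dotv (gradW t (s *: x)) x).
Proof.
have [derW dW] := W_derive t (s *: x) x.
have quotE : (fun h : R => h^-1 *: (((fun r => W t (r *: x)) \o shift s) (h *: 1)
                                    - W t (s *: x))) =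
             (fun h : R => h^-1 *: ((W t \o shift (s *: x)) (h *: x) - W t (s *: x))).
  by apply: funext => h; rewrite /= (_ : h%:A = h) ?scalerDl //; exact: mulr1.
by split; rewrite /derivable /derive quotE.
Qed.

Lemma W_le_quadratic t x : W t x <= b * dotv x x.
Proof.
have ray_derivable (s : R) : derivable (fun r : R => W t (r *: x)) s 1.
  by case: (is_derive_W_ray t x s).
have [c] := MVT ltr01 (fun s _ => is_derive_W_ray t x s)
  (derivable_within_continuous (fun s _ => ray_derivable s)).
rewrite in_itv /= scale1r scale0r W_at0 !subr0 mulr1 => /andP[c_gt0 c_lt1] ->.
apply: le_trans (dotv_le_vnorm _ _) _.
rewrite -sqr_vnorm expr2 mulrA ler_wpM2r ?sqrtr_ge0 //.
apply: (le_trans (gradW_le t (c *: x))); rewrite vnormZ gtr0_norm //.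
rewrite ler_wpM2l // -[leRHS]mul1r ler_wpM2r ?sqrtr_ge0 //.
exact: ltW.
Qed.

End QuadraticUpperBound.

Section SmallTruncatedIntegral.
Context {d} {T : measurableType d} {R : realType}.
Context {mu : {measure set T -> \bar R}} {D : set T}.
Variable S : T -> R.
Hypothesis mD : measurable D.
Hypothesis S_ge0 : forall t, 0 <= S t.
Hypothesis S_integrable : mu.-integrable D (EFin \o S).

Let measurable_minrS c : measurable_fun D (EFin \o fun t => Num.min (S t) c).
Proof.
apply/measurable_EFinP; apply: measurable_minr => //.
by apply/measurable_EFinP; case/integrableP: S_integrable.
Qed.

Let minrS_le c t : 0 <= c -> (`|(Num.min (S t) c)%:E| <= (S t)%:E)%E.
Proof. by move=> c_ge0; rewrite lee_fin ger0_norm ?le_min ?S_ge0 // ge_min lexx. Qed.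

Lemma integrable_minr c : 0 <= c -> mu.-integrable D (EFin \o fun t => Num.min (S t) c).
Proof.
move=> c_ge0; apply: le_integrable S_integrable => // t _.
by rewrite /= (ger0_norm (S_ge0 t)); exact: minrS_le.
Qed.

Lemma Rintegral_minr_small eta : 0 < eta ->
  exists2 delta, 0 < delta & \int[mu]_(t in D) Num.min (S t) delta <= eta.
Proof.
move=> eta_gt0.
pose f n t := (Num.min (S t) (harmonic n))%:E.
have f_cvg0 t : D t -> f ^~ t @ \oo --> 0%E.
  move=> _; apply/fine_cvgP; split; first exact: nearW.
  apply: (@squeeze_cvgr _ _ _ _ (fun _ => 0) harmonic); last exact: cvg_harmonic.
  - by apply: nearW => n /=; rewrite le_min S_ge0 harmonic_ge0 ge_min lexx orbT.
  - exact: cvg_cst.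
have := dominated_cvg mD (g := EFin \o S) (fun n => measurable_minrS (harmonic n)) f_cvg0
  (fun _ _ => isT) S_integrable (fun n t _ => minrS_le (harmonic n) t (harmonic_ge0 n)).
rewrite integral0 => /fine_cvg /(cvgr_lt _) /(_ _ eta_gt0) [n0 _ small].
exists (harmonic n0); first exact: harmonic_gt0.
by apply: ltW; apply: (small n0) => /=.
Qed.

End SmallTruncatedIntegral.

Section SuperquadraticGrowth.
Context {R : realType} {N : nat}.
Variables (e : nat -> R -> 'rV[R]_N) (m : nat).
Variables (W : R -> 'rV[R]_N -> R) (a b eps r : R).
Local Notation mu := (@lebesgue_measure R).
Local Notation ecomb := (ecomb e).
Hypothesis e_derivable : forall n t (i : 'I_N), derivable (fun s => e n s 0 i) t 1.
Hypothesis e_orthonormal : forall m n, ipL2 (e m) (e n) = (m == n)%:R.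
Hypothesis W_continuous : continuous (fun p : R * 'rV[R]_N => W p.1 p.2).
Hypothesis W_ge0 : forall t x, 0 <= W t x.
Hypothesis W_le_quadratic : forall t x, W t x <= b * dotv x x.
Hypothesis a_ge0 : 0 <= a.
Hypothesis eps_gt0 : 0 < eps.
Hypothesis r_gt0 : 0 < r.
Hypothesis W_ge_far : forall t x, r <= vnorm x -> (a + eps) * vnorm x ^+ 2 <= W t x.

Definition esum_sqr t := \sum_(k < m) dotv (e k t) (e k t).

Lemma esum_sqr_ge0 t : 0 <= esum_sqr t.
Proof. by apply: sumr_ge0 => k _; exact: dotv_ge0. Qed.

Lemma integrable_esum_sqr : mu.-integrable setT (EFin \o esum_sqr).
Proof.
apply: (integrable_sumR (mu := mu) measurableT m (fun k t => dotv (e k t) (e k t))).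
exact: (fun k => integrable_dotv_e e e_derivable e_orthonormal k k).
Qed.

Lemma continuous_W_ecomb d : continuous (fun t => W t (ecomb d m t)).
Proof.
move=> t0.
have cu : {for t0, continuous (ecomb d m)} := continuous_ecomb e e_derivable d m t0.
have pair_cont : {for t0, continuous (fun t => (t, ecomb d m t))}.
  exact: (cvg_pair (f := fun t => t) (g := ecomb d m) cvg_id cu).
exact: continuous_comp pair_cont (W_continuous (t0, ecomb d m t0)).
Qed.

Lemma integrable_W_ecomb d : mu.-integrable setT (EFin \o fun t => W t (ecomb d m t)).
Proof.
apply: le_integrable (integrableZlR measurableT b _
  (integrable_sqr_ecomb e e_derivable e_orthonormal d m)) => //.
  by apply/measurable_EFinP; apply: continuous_measurable_fun; exact: continuous_W_ecomb.
move=> t _; rewrite /= lee_fin ger0_norm ?W_ge0 //.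
exact: le_trans (W_le_quadratic _ _) (ler_norm _).
Qed.

Lemma W_ecomb_ge (d : nat -> R) t D : 0 < D -> \sum_(k < m) d k ^+ 2 <= D ->
  (a + eps) * (dotv (ecomb d m t) (ecomb d m t) - D * Num.min (esum_sqr t) (r ^+ 2 / D))
  <= W t (ecomb d m t).
Proof.
move=> D_gt0 D_ge; set u := ecomb d m t.
have ae_ge0 : 0 <= a + eps by rewrite addr_ge0 // ltW.
have [far|near] := leP r (vnorm u).
  apply: (le_trans _ (W_ge_far t u far)); rewrite sqr_vnorm.
  apply: ler_wpM2l => //; rewrite gerBl.
  apply: mulr_ge0; first exact: ltW.
  by rewrite le_min esum_sqr_ge0 divr_ge0 ?sqr_ge0 // ltW.
apply: (@le_trans _ _ 0); last exact: W_ge0.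
rewrite mulr_ge0_le0 // subr_le0.
have [_|_] := leP (esum_sqr t) (r ^+ 2 / D).
  apply: le_trans (dotv_sum_scale_le m d (fun k => e k t)) _.
  by rewrite ler_wpM2r ?esum_sqr_ge0.
rewrite mulrC divfK ?gt_eqF // -sqr_vnorm; apply: ltW.
by rewrite ltr_pXn2r // ?nnegrE ?sqrtr_ge0 ?ltW.
Qed.

Lemma Rintegral_W_ecomb_ge : exists2 K, 0 < K & forall d : nat -> R,
  K <= \sum_(k < m) d k ^+ 2 ->
  a * \sum_(k < m) d k ^+ 2 <= \int[mu]_(t in setT) W t (ecomb d m t).
Proof.
have ae_gt0 : 0 < a + eps by exact: ltr_wpDl.
have [delta delta_gt0 small] := Rintegral_minr_small (mu := mu) esum_sqr measurableT
  esum_sqr_ge0 integrable_esum_sqr _ (divr_gt0 eps_gt0 ae_gt0).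
exists (r ^+ 2 / delta) => [|d K_le]; first by rewrite divr_gt0 ?exprn_gt0.
set D := \sum_(k < m) d k ^+ 2 in K_le *.
have D_gt0 : 0 < D by apply: lt_le_trans K_le; rewrite divr_gt0 ?exprn_gt0.
set c := r ^+ 2 / D.
have c_ge0 : 0 <= c by rewrite divr_ge0 ?sqr_ge0 ?ltW.
have c_le : c <= delta by rewrite ler_pdivrMr // mulrC -ler_pdivrMr.
have int_min := integrable_minr (mu := mu) esum_sqr measurableT esum_sqr_ge0
  integrable_esum_sqr.
have J_le : \int[mu]_(t in setT) Num.min (esum_sqr t) c <= eps / (a + eps).
  apply: le_trans small; apply: le_Rintegral => //.
  - exact: int_min.
  - exact/int_min/ltW.
  - by move=> t _; rewrite le_min ge_min lexx /= ge_min c_le orbT.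
have int_sqr := integrable_sqr_ecomb e e_derivable e_orthonormal d m.
have int_Dmin := integrableZlR measurableT D _ (int_min c c_ge0).
have int_diff := integrableBR measurableT _ _ int_sqr int_Dmin.
have int_lower := integrableZlR measurableT (a + eps) _ int_diff.
apply: (le_trans _ (le_Rintegral measurableT int_lower (integrable_W_ecomb d)
  (fun t _ => W_ecomb_ge d t D D_gt0 (lexx D)))).
rewrite RintegralZl // RintegralB // RintegralZl //; last exact: int_min c c_ge0.
rewrite (L2_sqr_ecomb _ e_derivable e_orthonormal) -/D.
move: J_le; set J := \int[mu]_(t in setT) _ => J_le.
have : (a + eps) * J <= eps by rewrite mulrC -ler_pdivlMr.
nra.
Qed.

End SuperquadraticGrowth.

Section SpanCoordinates.
Context {R : realType} {N nbar : nat}.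
Variable e : nat -> R -> 'rV[R]_N.

Definition coef_ext (c : 'I_nbar -> R) (z : R) : nat -> R :=
  fun k => odflt z (omap c (insub k)).

Lemma coef_ext_ord c z (i : 'I_nbar) : coef_ext c z i = c i.
Proof. by rewrite /coef_ext valK. Qed.

Lemma coef_ext_nbar c z : coef_ext c z nbar = z.
Proof. by rewrite /coef_ext insubN // ltnn. Qed.

Lemma ecomb_coef_ext c z :
  ecomb e (coef_ext c z) nbar.+1 = (fun t => z *: e nbar t + lincomb e c t).
Proof.
apply: funext => t; rewrite /ecomb big_ord_recr /= coef_ext_nbar addrC; congr (_ + _).
by apply: eq_bigr => i _; rewrite coef_ext_ord.
Qed.

Lemma lincomb_ecomb c : lincomb e c = ecomb e (coef_ext c 0) nbar.+1.
Proof. by rewrite ecomb_coef_ext; apply: funext => t; rewrite scale0r add0r. Qed.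

Lemma sum_sqr_coef_ext c z :
  \sum_(k < nbar.+1) coef_ext c z k ^+ 2 =
  \sum_(k < nbar.+1) coef_ext c 0 k ^+ 2 + z ^+ 2.
Proof.
rewrite !big_ord_recr /= !coef_ext_nbar expr0n /= addr0; congr (_ + _).
by apply: eq_bigr => i _; rewrite !coef_ext_ord.
Qed.

End SpanCoordinates.

Section FunctionalOnSpan.
Context {R : realType} {N : nat}.
Variables (e : nat -> R -> 'rV[R]_N) (lam : nat -> R) (W : R -> 'rV[R]_N -> R).
Hypothesis e_derivable : forall n t (i : 'I_N), derivable (fun s => e n s 0 i) t 1.
Hypothesis e_orthonormal : forall m n, ipL2 (e m) (e n) = (m == n)%:R.

Lemma Enorm_ecomb_sqr_le d m :
  Enorm lam e (ecomb e d m) ^+ 2 <=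
  (\sum_(n < m) (`|lam n| + (lam n == 0)%:R)) * \sum_(n < m) d n ^+ 2.
Proof.
pose w n := `|lam n| + (lam n == 0)%:R.
have w_ge0 n : 0 <= w n by rewrite addr_ge0.
rewrite /Enorm (limn_weighted_ipL2_ecomb _ e_derivable e_orthonormal w xpredT).
rewrite sqr_sqrtr; last by apply: sumr_ge0 => n _; rewrite mulr_ge0 ?sqr_ge0.
apply: (sum_mul_le_mul_sum m w (fun n => d n ^+ 2)) => // n.
exact: sqr_ge0.
Qed.

Variable nbar : nat.
Hypothesis lam_nonpos : forall n, (n < nbar)%N -> lam n <= 0.
Hypothesis lam_pos : 0 < lam nbar.

Lemma Ifun_ecomb_le d :
  Ifun lam e W (ecomb e d nbar.+1) <=
  lam nbar / 2 * d nbar ^+ 2 -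
  \int[lebesgue_measure]_(t in setT) W t (ecomb e d nbar.+1 t).
Proof.
have limn_eq := limn_weighted_ipL2_ecomb _ e_derivable e_orthonormal.
rewrite /Ifun (limn_eq lam (fun n => 0 < lam n)).
rewrite (limn_eq (fun n => `|lam n|) (fun n => lam n < 0)).
have -> : \sum_(n < nbar.+1 | 0 < lam n) lam n * d n ^+ 2 = lam nbar * d nbar ^+ 2.
  rewrite big_mkcond big_ord_recr /= lam_pos big1 ?add0r // => n _.
  by rewrite ltNge lam_nonpos.
have : 0 <= \sum_(n < nbar.+1 | lam n < 0) `|lam n| * d n ^+ 2.
  by apply: sumr_ge0 => n _; rewrite mulr_ge0 ?sqr_ge0.
lra.
Qed.

End FunctionalOnSpan.

Section FunctionalOnBoundary.
Context {R : realType} {N : nat}.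
Variables (e : nat -> R -> 'rV[R]_N) (lam : nat -> R) (W : R -> 'rV[R]_N -> R).
Variables (nbar : nat) (b eps rinf : R).
Hypothesis e_derivable : forall n t (i : 'I_N), derivable (fun s => e n s 0 i) t 1.
Hypothesis e_orthonormal : forall m n, ipL2 (e m) (e n) = (m == n)%:R.
Hypothesis lam_nonpos : forall n, (n < nbar)%N -> lam n <= 0.
Hypothesis lam_pos : 0 < lam nbar.
Hypothesis W_continuous : continuous (fun p : R * 'rV[R]_N => W p.1 p.2).
Hypothesis W_ge0 : forall t x, 0 <= W t x.
Hypothesis W_le_quadratic : forall t x, W t x <= b * dotv x x.
Hypothesis eps_gt0 : 0 < eps.
Hypothesis rinf_gt0 : 0 < rinf.
Hypothesis W_ge_far :
  forall t x, rinf <= vnorm x -> (lam nbar / 2 + eps) * vnorm x ^+ 2 <= W t x.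

Let Ifun_ecomb_le_span :=
  Ifun_ecomb_le e lam W e_derivable e_orthonormal nbar lam_nonpos lam_pos.

Lemma Ifun_lincomb_le0 (c : 'I_nbar -> R) : Ifun lam e W (lincomb e c) <= 0.
Proof.
rewrite (lincomb_ecomb e c).
apply: le_trans (Ifun_ecomb_le_span _) _.
rewrite coef_ext_nbar expr0n /= mulr0 sub0r oppr_le0.
by apply: Rintegral_ge0 => t _; exact: W_ge0.
Qed.

Lemma Ifun_ecomb_le0_large : exists2 K, 0 < K & forall d : nat -> R,
  K <= \sum_(k < nbar.+1) d k ^+ 2 -> Ifun lam e W (ecomb e d nbar.+1) <= 0.
Proof.
have lam2_ge0 : 0 <= lam nbar / 2 by rewrite divr_ge0 ?ltW.
have [K K_gt0 growth] := Rintegral_W_ecomb_ge e nbar.+1 W (lam nbar / 2) b eps rinf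
  e_derivable e_orthonormal W_continuous W_ge0 W_le_quadratic lam2_ge0 eps_gt0 rinf_gt0
  W_ge_far.
exists K => // d K_le.
apply: le_trans (Ifun_ecomb_le_span d) _.
have := growth d K_le.
have : d nbar ^+ 2 <= \sum_(k < nbar.+1) d k ^+ 2.
  by rewrite big_ord_recr /= lerDr sumr_ge0 // => k _; exact: sqr_ge0.
nra.
Qed.

Lemma Ifun_boundaryQ_le0 : exists2 rho0, 0 < rho0 & forall rho, rho0 <= rho ->
  forall u, boundaryQ lam e nbar rho u -> Ifun lam e W u <= 0.
Proof.
have [K K_gt0 Ifun_le0] := Ifun_ecomb_le0_large.
set Wt := \sum_(n < nbar.+1) (`|lam n| + (lam n == 0)%:R).
have Wt_ge0 : 0 <= Wt by rewrite sumr_ge0 // => n _; rewrite addr_ge0.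
have CK_ge0 : 0 <= (1 + Wt) * K by rewrite mulr_ge0 ?addr_ge0 // ltW.
exists (1 + (1 + Wt) * K) => [|rho rho_ge]; first lra.
have CK_le : (1 + Wt) * K <= rho ^+ 2 by nra.
have K_le : K <= rho ^+ 2 by apply: le_trans CK_le; rewrite ler_peMl ?lerDl // ltW.
have coef_sqr_ge0 (c : 'I_nbar -> R) : 0 <= \sum_(k < nbar.+1) coef_ext c 0 k ^+ 2.
  by apply: sumr_ge0 => k _; exact: sqr_ge0.
move=> u [[[c [-> _]] | [v [[c [-> _]] ->]]] | [z [v [_ [[c [-> Ec]] ->]]]]].
- exact: Ifun_lincomb_le0.
- rewrite -ecomb_coef_ext; apply: Ifun_le0; rewrite sum_sqr_coef_ext.
  by have := coef_sqr_ge0 c; lra.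
- rewrite -ecomb_coef_ext; apply: Ifun_le0; rewrite sum_sqr_coef_ext.
  have := Enorm_ecomb_sqr_le e lam e_derivable e_orthonormal (coef_ext c 0) nbar.+1.
  rewrite -lincomb_ecomb Ec -/Wt.
  have := coef_sqr_ge0 c; have := sqr_ge0 z; nra.
Qed.

End FunctionalOnBoundary.

Theorem lemma2p5 (R : realType) (N : nat) (L : R -> 'M[R]_N)
  (W : R -> 'rV[R]_N -> R) (gradW : R -> 'rV[R]_N -> 'rV[R]_N)
  (lam : nat -> R) (e : nat -> R -> 'rV[R]_N) (nbar : nat) (varrho : R) :
  (0 < N)%N ->
  (* L continuous, symmetric-matrix valued *)
  (forall i j : 'I_N, continuous (fun t => L t i j)) ->
  (forall t, (L t)^T = L t) ->
  (* W in C^1(R x R^N), gradW its gradient in x *)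
  continuous (fun p : R * 'rV[R]_N => W p.1 p.2) ->
  (forall i : 'I_N, continuous (fun p : R * 'rV[R]_N => gradW p.1 p.2 0 i)) ->
  (forall t x v, is_derive x v (W t) (dotv (gradW t x) v)) ->
  (* spectral data of H *)
  eigen_basis L lam e ->
  (forall n, (n < nbar)%N -> lam n <= 0) -> 0 < lam nbar ->
  (* (L1) *)
  (exists alpha M : R, 1 < alpha /\ 0 < M /\
     (fun r : R => lebesgue_measure
        [set t : R | r <= `|t| /\ lmin L t <= M * `|t| * (ln `|t|) `^ alpha])
       @ +oo --> 0%E) ->
  (* (L2) *)
  (exists L0 : R, 0 < L0 /\ forall t x, quadf (L t) x >= - L0 * vnorm x ^+ 2) ->
  (* (W1) *)
  (exists b1 : R, 0 < b1 /\ forall t x, W t 0 = 0 /\ vnorm (gradW t x) <= b1 * vnorm x) ->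
  (* (W2), (W3) with Wtilde = 2W - (gradW, x) *)
  (exists b2 b3 r1 m : R, [/\ 0 < b2, 0 < b3, 0 < r1, 1 < m &
     forall t x,
       (r1 <= vnorm x -> 2 * W t x - dotv (gradW t x) x >= b2 * vnorm x `^ m) /\
       (vnorm x < r1 -> 2 * W t x - dotv (gradW t x) x >= - b3 * vnorm x)]) ->
  (* (W4) *)
  (exists r2 sigma0 : R, 0 < r2 /\ 0 < sigma0 /\
     forall t x, vnorm x <= r2 -> `|W t x| <= (lam nbar - sigma0) / 2 * vnorm x ^+ 2) ->
  (* (W5) *)
  (exists eps0 rinf : R, 0 < eps0 /\ 0 < rinf /\
     forall t x, rinf <= vnorm x -> W t x >= (lam nbar / 2 + eps0) * vnorm x ^+ 2) ->
  (* (W6) *)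
  (forall t x, 0 <= W t x) ->
  0 < varrho ->
  exists rho : R, varrho < rho /\
    forall u, boundaryQ lam e nbar rho u -> Ifun lam e W u <= 0.
Proof.
move=> _ _ _ W_cont _ W_der [[_ e_orth] _ e_eigen _ _] lam_nonpos lam_pos _ _
  [b1 [b1_gt0 W1]] _ _ [eps0 [rinf [eps0_gt0 [rinf_gt0 W5]]]] W_ge0 varrho_gt0.
have e_der n t i : derivable (fun s => e n s 0 i) t 1 by case: (e_eigen n t i).
have W_le := W_le_quadratic W gradW b1 W_der (fun t => (W1 t 0).1) (ltW b1_gt0)
  (fun t x => (W1 t x).2).
have [rho0 rho0_gt0 Ifun_le0] := Ifun_boundaryQ_le0 e lam W nbar b1 eps0 rinf
  e_der e_orth lam_nonpos lam_pos W_cont W_ge0 W_le eps0_gt0 rinf_gt0 W5.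
exists (varrho + rho0); split; first by rewrite ltrDl.
by apply: Ifun_le0; rewrite lerDr ltW.
Qed.
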